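(* Let $q\ge 2$ and $m\ge 1$. The number of different unordered partitions of ${\bf Z}_q^{(q^m-1)/(q-1)}$ into subcubes whose star matrices are fractal matrices with parameters $q$ and $m$ is exactly $\left(\frac{q^m-1}{q-1}\right)!$.
   Context: A subcube of ${\bf Z}_q^n$ is obtained by fixing some coordinates and letting the others run through ${\bf Z}_q$; its star pattern is the vector over ${\bf Z}_q\cup\{*\}$ with the fixed values in fixed coordinates and $*$ in free ones. The star matrix of a partition of ${\bf Z}_q^n$ into subcubes is the matrix whose rows are the star patterns of the subcubes. The matrices $M_{q,m}$ are defined recursively: $M_{q,0}$ has one row and zero columns; for $m\ge1$, $M_{q,m}$ consists of $q$ horizontal blocks indexed by $a=0,\dots,q-1$, each with $q^{m-1}$ rows; the first column has entry $a$ in every row of block $a$; the remaining columns are divided into $q$ vertical stripes of width equal to the number of columns of $M_{q,m-1}$, and in block $a$ the $a$-th stripe is a copy of $M_{q,m-1}$ while all other stripes of block $a$ consist only of $*$. A fractal matrix with parameters $q,m$ is any matrix obtained from $M_{q,m}$ by permuting rows and columns. ($M_{q,m}$ has $q^m$ rows and $\frac{q^m-1}{q-1}$ columns.) *)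

From mathcomp Require Import all_boot all_fingroup.
Set Implicit Arguments. Unset Strict Implicit. Unset Printing Implicit Defensive.

(* Points of Z_q^n are functions 'I_n -> 'I_q (coordinates taken in {0..q-1}).
   A star pattern is a function 'I_n -> option 'I_q, with None standing for the star symbol. *)
Section Cubes.
Variables (q n : nat).

Definition point := {ffun 'I_n -> 'I_q}.
Definition starpat := {ffun 'I_n -> option 'I_q}.

Definition cube (v : starpat) : {set point} :=
  [set x : point | [forall i, if v i is Some a then x i == a else true]].

Definition is_subcube (B : {set point}) : bool := [exists v : starpat, cube v == B].

(* the star pattern of a subcube B (unique since cube is injective) *)
Definition star_pattern (B : {set point}) : starpat :=
  odflt [ffun=> None] [pick v : starpat | cube v == B].

(* row of the star matrix, with columns permuted by s: column j is old column s j;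
   entries as option nat (None = star) *)
Definition perm_row (s : 'S_n) (v : starpat) : seq (option nat) :=
  [seq omap (@nat_of_ord q) (v (s j)) | j <- enum 'I_n].

End Cubes.

Fixpoint Mfrac (q m : nat) : seq (seq (option nat)) :=
  match m with
  | 0 => [:: [::]]
  | m'.+1 =>
      let Mp := Mfrac q m' in
      let w := size (head [::] Mp) in
      flatten [seq [seq Some a :: flatten [seq (if b == a then r else nseq w None)
                                           | b <- iota 0 q]
                   | r <- Mp]
              | a <- iota 0 q]
  end.

(* The star matrix of the partition P (rows = star patterns of its subcubes, in
   any order) is a fractal matrix with parameters q, m: some column permutation
   and some row permutation of it equal M_{q,m}. *)
Definition fractal_partition (q m n : nat) (P : {set {set point q n}}) : bool :=
  [exists s : 'S_n,
     perm_eq [seq perm_row s (star_pattern B) | B <- enum P] (Mfrac q m)].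

From mathcomp Require Import all_boot all_fingroup zify.
Set Implicit Arguments. Unset Strict Implicit. Unset Printing Implicit Defensive.

(* Read in the column order s, every point of Z_q^n matches exactly one row of M_{q,m}:
   its first coordinate selects the block, and the corresponding stripe must then match a
   row of M_{q,m-1}.  Hence the rows of M_{q,m}, with columns permuted by s, are the star
   patterns of a partition into subcubes, and every fractal partition arises this way.
   Distinct s give distinct partitions because M_{q,m} is rigid: a map of columns sending
   rows to rows fixes column 0 (the only column without stars), so it preserves blocks,
   maps each stripe into itself, and by induction is the identity inside each stripe.
   The count is therefore |S_n| = n!. *)

Lemma all2_map_diag (S T U : Type) (R : S -> T -> bool) (f : U -> S) (g : U -> T) s :
  all2 R (map f s) (map g s) = all (fun u => R (f u) (g u)) s.
Proof. by elim: s => //= u s ->. Qed.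

Lemma flatten_map_nseq (S T : Type) (x : T) w (s : seq S) :
  flatten [seq nseq w x | _ <- s] = nseq (size s * w) x.
Proof. by elim: s => //= _ s ->; rewrite mulSn nseqD. Qed.

Lemma size1_eq (T : eqType) (s : seq T) x y : size s = 1 -> x \in s -> y \in s -> x = y.
Proof. by case: s => [|z []] //= _; rewrite !inE => /eqP -> /eqP ->. Qed.

Definition matches (r : seq (option nat)) (x : seq nat) : bool :=
  all2 (fun o v => if o is Some a then v == a else true) r x.

Lemma matches_cat r1 r2 x1 x2 : size r1 = size x1 ->
  matches (r1 ++ r2) (x1 ++ x2) = matches r1 x1 && matches r2 x2.
Proof. by elim: r1 x1 => [|o r1 IH] [|v x1] //= [/IH ->]; rewrite andbA. Qed.

Lemma matches_stars k x : matches (nseq k None) x = (size x == k).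
Proof. by elim: k x => [|k IH] [|v x] //=; rewrite IH. Qed.

Definition select_cols (sg : nat -> nat) k (r : seq (option nat)) :=
  [seq nth None r (sg j) | j <- iota 0 k].

Lemma nth_select_cols sg k r j : j < k -> nth None (select_cols sg k r) j = nth None r (sg j).
Proof. by move=> jk; rewrite (nth_map 0) ?size_iota // nth_iota. Qed.

Section FractalMatrix.
Variable q : nat.
Hypothesis q_gt1 : 1 < q.

Lemma exists_other b : exists2 a, a < q & b != a.
Proof. by exists (b == 0); case: b => [|[|b]] //=; lia. Qed.

Fixpoint ncols m := if m is m'.+1 then (q * ncols m').+1 else 0.

Definition stripe w b c := (b * w + c).+1.

Lemma stripe_lt w b c : b < q -> c < w -> stripe w b c < (q * w).+1.
Proof. by rewrite /stripe ltnS; nia. Qed.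

Lemma stripeP w j : 0 < j -> j < (q * w).+1 ->
  exists b c, [/\ b < q, c < w & j = stripe w b c].
Proof.
move=> j_gt0 j_lt; have w_gt0 : 0 < w by case: w j_lt => //; rewrite muln0; lia.
exists (j.-1 %/ w), (j.-1 %% w); split.
- by rewrite ltn_divLR //; lia.
- by rewrite ltn_pmod.
- by rewrite /stripe -divn_eq; lia.
Qed.

Definition lift_row w a (r : seq (option nat)) :=
  Some a :: flatten [seq (if b == a then r else nseq w None) | b <- iota 0 q].

Lemma lift_rowE w a r : a < q ->
  lift_row w a r = Some a :: nseq (a * w) None ++ r ++ nseq ((q - a.+1) * w) None.
Proof.
move=> a_lt; rewrite /lift_row; congr (_ :: _).
have stars (s : seq nat) : a \notin s ->
    flatten [seq (if b == a then r else nseq w None) | b <- s] = nseq (size s * w) None.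
  move=> a_s; rewrite -flatten_map_nseq; congr flatten; apply/eq_in_map => b b_s.
  by case: eqP b_s => // ->; rewrite (negbTE a_s).
rewrite -{1}(subnKC a_lt) iotaD -addn1 iotaD !map_cat !flatten_cat /= eqxx cats0.
by rewrite !stars ?size_iota ?mem_iota ?catA //; lia.
Qed.

Lemma size_lift_row w a r : a < q -> size r = w -> size (lift_row w a r) = (q * w).+1.
Proof. by move=> a_lt r_w; rewrite lift_rowE //= !size_cat !size_nseq r_w; nia. Qed.

Lemma nth_lift_row w a r b c : a < q -> size r = w -> c < w ->
  nth None (lift_row w a r) (stripe w b c) = if b == a then nth None r c else None.
Proof.
move=> a_lt r_w c_lt; rewrite lift_rowE //= !nth_cat !size_nseq r_w.
case: (ltngtP b a) => [b_lt|b_gt|->].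
- by rewrite ifT ?nth_nseq ?if_same //; nia.
- have [-> ->] : (b * w + c < a * w) = false /\ (b * w + c - a * w < w) = false.
    by split; apply/negbTE; nia.
  by rewrite nth_nseq if_same.
- by rewrite ltnNge leq_addr /= addKn c_lt.
Qed.

Lemma matches_lift_row w a r x0 x : a < q -> size r = w -> size x = q * w ->
  matches (lift_row w a r) (x0 :: x) = (x0 == a) && matches r (take w (drop (a * w) x)).
Proof.
move=> a_lt r_w x_size; rewrite lift_rowE // [LHS]/= -/(matches _ _); congr (_ && _).
rewrite -{1}(cat_take_drop (a * w) x) -{1}(cat_take_drop w (drop (a * w) x)).
rewrite !matches_cat ?size_nseq ?r_w ?size_takel ?size_drop ?x_size; try nia.
by rewrite !matches_stars !size_drop x_size size_takel ?eqxx ?andbT; try nia.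
Qed.

Lemma MfracE m : Mfrac q m.+1 =
  [seq lift_row (size (head [::] (Mfrac q m))) a r | a <- iota 0 q, r <- Mfrac q m].
Proof. by []. Qed.

Lemma Mfrac_shape m : Mfrac q m != [::] /\ {in Mfrac q m, forall r, size r = ncols m}.
Proof.
elim: m => [|m [ne sz]]; first by split => // r; rewrite inE => /eqP ->.
rewrite MfracE; have -> : size (head [::] (Mfrac q m)) = ncols m.
  by case: (Mfrac q m) ne sz => // r s _; apply; rewrite mem_head.
split; first by rewrite -size_eq0 size_allpairs size_iota muln_eq0 negb_or size_eq0 ne; lia.
move=> _ /allpairsP[[a r] /= [a_in /sz r_size ->]].
by rewrite size_lift_row //; move: a_in; rewrite mem_iota; lia.
Qed.

Lemma size_Mfrac m r : r \in Mfrac q m -> size r = ncols m.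
Proof. exact: (Mfrac_shape m).2. Qed.

Lemma Mfrac_rec m :
  Mfrac q m.+1 = [seq lift_row (ncols m) a r | a <- iota 0 q, r <- Mfrac q m].
Proof.
rewrite MfracE; have [ne _] := Mfrac_shape m.
by case: (Mfrac q m) ne (@size_Mfrac m) => // r s _ /(_ r (mem_head _ _)) ->.
Qed.

Lemma Mfrac_recP m r : reflect
  (exists a r', [/\ a < q, r' \in Mfrac q m & r = lift_row (ncols m) a r'])
  (r \in Mfrac q m.+1).
Proof.
rewrite Mfrac_rec; apply: (iffP allpairsP) => [[[a r'] /=]|[a [r' [a_lt r'_in ->]]]].
  by rewrite mem_iota => -[/andP[_ a_lt] r'_in ->]; exists a, r'.
by exists (a, r'); rewrite mem_iota.
Qed.

Lemma lift_row_Mfrac m a r : a < q -> r \in Mfrac q m ->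
  lift_row (ncols m) a r \in Mfrac q m.+1.
Proof. by move=> a_lt r_in; apply/Mfrac_recP; exists a, r. Qed.

Lemma Mfrac_row m : exists r, r \in Mfrac q m.
Proof.
by have [+ _] := Mfrac_shape m; case: (Mfrac q m) => // r s _; exists r; rewrite mem_head.
Qed.

Lemma Mfrac_lt m r : r \in Mfrac q m -> all (fun o => odflt 0 o < q) r.
Proof.
elim: m r => [|m IH] r; first by rewrite inE => /eqP ->.
case/Mfrac_recP => a [r' [a_lt /IH r'_lt ->]].
by rewrite lift_rowE //= !all_cat !all_nseq /= a_lt r'_lt; lia.
Qed.

Lemma Mfrac_nonstar m c : c < ncols m -> exists2 r, r \in Mfrac q m & nth None r c != None.
Proof.
elim: m c => [|m IH] // c c_lt; have [r0 r0_in] := Mfrac_row m.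
have [-> | c_gt0] := posnP c.
  by exists (lift_row (ncols m) 0 r0); rewrite // lift_row_Mfrac //; lia.
have [b [c' [b_lt c'_lt ->]]] := stripeP c_gt0 c_lt.
have [r' r'_in r'_c'] := IH c' c'_lt.
exists (lift_row (ncols m) b r'); first exact: lift_row_Mfrac.
by rewrite nth_lift_row ?eqxx ?(size_Mfrac r'_in).
Qed.

Lemma Mfrac_uniq m : uniq (Mfrac q m).
Proof.
elim: m => // m IH; rewrite Mfrac_rec allpairs_uniq ?iota_uniq //.
move=> _ _ /allpairsP[[a r] /= [a_in r_in ->]] /allpairsP[[a' r'] /= [a'_in r'_in ->]] /=.
move: a_in a'_in; rewrite !mem_iota /= => a_lt a'_lt.
rewrite !lift_rowE // => -[<-] /eqP; rewrite eqseq_cat ?size_nseq // => /andP[_].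
by rewrite eqseq_cat ?(size_Mfrac r_in) ?(size_Mfrac r'_in) // => /andP[/eqP -> _].
Qed.

Lemma Mfrac_cover m x : size x = ncols m -> all (fun v => v < q) x ->
  count (matches^~ x) (Mfrac q m) = 1.
Proof.
elim: m x => [|m IH] [|x0 x] // => -[x_size] /andP[x0_lt x_lt].
set w := ncols m; pose chunk a := take w (drop (a * w) x).
have count_block a : a < q ->
    count (matches^~ (x0 :: x)) [seq lift_row w a r | r <- Mfrac q m] = (a == x0).
  move=> a_lt; rewrite count_map.
  rewrite (eq_in_count (a2 := fun r => (x0 == a) && matches r (chunk a))).
    case: (eqVneq x0 a) => [<-|_]; last by rewrite count_pred0.
    apply: IH; first by rewrite size_takel // size_drop x_size; nia.
    by apply/allP => v /mem_take /mem_drop /(allP x_lt).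
  by move=> r r_in; apply: matches_lift_row; rewrite ?(size_Mfrac r_in).
rewrite Mfrac_rec count_flatten -map_comp (eq_in_map _ (fun a => (a == x0 : nat)) _).1.
  rewrite sumn_count (@eq_count _ _ (pred1 x0)) // count_uniq_mem ?iota_uniq //.
  by rewrite mem_iota add0n x0_lt.
by move=> a; rewrite mem_iota => /andP[_ /count_block].
Qed.

Lemma Mfrac_matching m x : size x = ncols m -> all (fun v => v < q) x ->
  exists2 r, r \in Mfrac q m & matches r x.
Proof. by move=> x_size x_lt; apply/hasP; rewrite has_count Mfrac_cover. Qed.

Lemma Mfrac_matching_uniq m x r1 r2 : size x = ncols m -> all (fun v => v < q) x ->
  r1 \in Mfrac q m -> r2 \in Mfrac q m -> matches r1 x -> matches r2 x -> r1 = r2.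
Proof.
move=> x_size x_lt r1_in r2_in r1_x r2_x.
apply: (@size1_eq _ (filter (matches^~ x) (Mfrac q m))).
  by rewrite size_filter Mfrac_cover.
all: by rewrite mem_filter ?r1_x ?r2_x.
Qed.

Lemma Mfrac_head m r : r \in Mfrac q m.+1 -> nth None r 0 != None.
Proof. by case/Mfrac_recP => a [r' [_ _ ->]]. Qed.

Section RigidityStep.
Variables (m : nat) (sg : nat -> nat).
Local Notation w := (ncols m).
Hypothesis sg_lt : forall j, j < ncols m.+1 -> sg j < ncols m.+1.
Hypothesis sg_rows :
  {in Mfrac q m.+1, forall r, select_cols sg (ncols m.+1) r \in Mfrac q m.+1}.

Lemma sg_fix0 : sg 0 = 0.
Proof.
apply/eqP; apply: contraT; rewrite -lt0n => sg0_gt0.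
have [b [c [b_lt c_lt sg0E]]] := stripeP sg0_gt0 (sg_lt (ltn0Sn _)).
have [a a_lt b_a] := exists_other b; have [r r_in] := Mfrac_row m.
have := Mfrac_head (sg_rows (lift_row_Mfrac a_lt r_in)).
by rewrite nth_select_cols // sg0E nth_lift_row ?(size_Mfrac r_in) // (negbTE b_a).
Qed.

Lemma select_lift_row a r : a < q -> r \in Mfrac q m ->
  exists2 r', r' \in Mfrac q m & select_cols sg (ncols m.+1) (lift_row w a r) = lift_row w a r'.
Proof.
move=> a_lt r_in; have := sg_rows (lift_row_Mfrac a_lt r_in).
case/Mfrac_recP => a' [r' [_ r'_in E]]; exists r' => //; rewrite E.
have : nth None (select_cols sg (ncols m.+1) (lift_row w a r)) 0 = Some a' by rewrite E.
by rewrite nth_select_cols // sg_fix0 => -[->].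
Qed.

Lemma select_stripe_star a r b c : a < q -> r \in Mfrac q m -> b < q -> c < w -> b != a ->
  nth None (lift_row w a r) (sg (stripe w b c)) = None.
Proof.
move=> a_lt r_in b_lt c_lt b_a; have [r' r'_in E] := select_lift_row a_lt r_in.
rewrite -(@nth_select_cols sg (ncols m.+1)) ?stripe_lt // E.
by rewrite nth_lift_row ?(size_Mfrac r'_in) // (negbTE b_a).
Qed.

Lemma sg_stripe b c : b < q -> c < w -> exists2 c', c' < w & sg (stripe w b c) = stripe w b c'.
Proof.
move=> b_lt c_lt; have [a a_lt b_a] := exists_other b; have [r r_in] := Mfrac_row m.
have [sg_j0 | sg_j_gt0] := posnP (sg (stripe w b c)).
  by have := select_stripe_star a_lt r_in b_lt c_lt b_a; rewrite sg_j0.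
have [b' [c' [b'_lt c'_lt E]]] := stripeP sg_j_gt0 (sg_lt (stripe_lt b_lt c_lt)).
have [eq_bb' | b_b'] := eqVneq b b'; first by exists c' => //; rewrite E eq_bb'.
have [r' r'_in r'_c'] := Mfrac_nonstar c'_lt.
have := select_stripe_star b'_lt r'_in b_lt c_lt b_b'.
by rewrite E nth_lift_row ?eqxx ?(size_Mfrac r'_in) // => star; rewrite star in r'_c'.
Qed.

Definition stripe_map b c := (sg (stripe w b c)).-1 - b * w.

Lemma stripe_mapE b c : b < q -> c < w ->
  stripe_map b c < w /\ sg (stripe w b c) = stripe w b (stripe_map b c).
Proof.
by move=> b_lt c_lt; have [c' c'_lt E] := sg_stripe b_lt c_lt; rewrite /stripe_map E /= addKn.
Qed.

Lemma stripe_map_rows b : b < q ->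
  {in Mfrac q m, forall r, select_cols (stripe_map b) w r \in Mfrac q m}.
Proof.
move=> b_lt r r_in; have [r' r'_in E] := select_lift_row b_lt r_in.
suff -> : select_cols (stripe_map b) w r = r' by [].
apply: (@eq_from_nth _ None); first by rewrite size_map size_iota (size_Mfrac r'_in).
move=> c; rewrite size_map size_iota => c_lt; have [map_lt sgE] := stripe_mapE b_lt c_lt.
transitivity (nth None (lift_row w b r) (sg (stripe w b c))).
  by rewrite sgE nth_lift_row ?eqxx ?(size_Mfrac r_in) ?nth_select_cols.
rewrite -(@nth_select_cols sg (ncols m.+1)) ?stripe_lt // E.
by rewrite nth_lift_row ?eqxx ?(size_Mfrac r'_in).
Qed.

End RigidityStep.

Lemma Mfrac_rigid m sg : (forall j, j < ncols m -> sg j < ncols m) ->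
  {in Mfrac q m, forall r, select_cols sg (ncols m) r \in Mfrac q m} ->
  forall j, j < ncols m -> sg j = j.
Proof.
elim: m sg => [|m IH] sg sg_lt sg_rows j // j_lt.
have [-> | j_gt0] := posnP j; first exact: sg_fix0 sg_lt sg_rows.
have [b [c [b_lt c_lt ->]]] := stripeP j_gt0 j_lt.
have [map_lt ->] := stripe_mapE sg_lt sg_rows b_lt c_lt.
rewrite (IH (stripe_map m sg b)) // => [c' c'_lt | ]; last exact: stripe_map_rows.
by case: (stripe_mapE sg_lt sg_rows b_lt c'_lt).
Qed.

End FractalMatrix.

Section Cubes.
Variables (q n : nat).

Lemma fill_in_cube (v : starpat q n) c : [ffun i => odflt c (v i)] \in cube v.
Proof. by rewrite inE; apply/forallP => i; rewrite ffunE; case: (v i). Qed.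

Hypothesis q_gt1 : 1 < q.

Lemma cube_sub_pattern (v v' : starpat q n) i b :
  cube v \subset cube v' -> v' i = Some b -> v i = Some b.
Proof.
move=> sub_vv' v'_i; have [a a_lt b_a] := exists_other q_gt1 b.
have := subsetP sub_vv' _ (fill_in_cube v (Ordinal a_lt)); rewrite inE => /forallP /(_ i).
by rewrite v'_i ffunE; case: (v i) => /= [? /eqP -> // | /eqP a_b]; rewrite -a_b eqxx in b_a.
Qed.

Lemma cube_inj : injective (@cube q n).
Proof.
move=> v v' E; apply/ffunP => i.
case v'_i: (v' i) => [b|]; first by apply: (cube_sub_pattern _ v'_i); rewrite E.
by case v_i: (v i) => [a|] //; rewrite -v'_i (@cube_sub_pattern v' v _ a) // E.
Qed.

Lemma star_pattern_cube (v : starpat q n) : star_pattern (cube v) = v.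
Proof. by rewrite /star_pattern; case: pickP => [v' /eqP/cube_inj | /(_ v)]; rewrite ?eqxx. Qed.

Lemma star_patternK (B : {set point q n}) : is_subcube B -> cube (star_pattern B) = B.
Proof. by case/existsP => v /eqP <-; rewrite star_pattern_cube. Qed.

Definition point_row (s : 'S_n) (x : point q n) : seq nat :=
  [seq val (x (s j)) | j <- enum 'I_n].

Lemma size_point_row s x : size (point_row s x) = n.
Proof. by rewrite size_map size_enum_ord. Qed.

Lemma point_row_lt s x : all (fun v => v < q) (point_row s x).
Proof. by apply/allP => _ /mapP[j _ ->]; apply: ltn_ord. Qed.

Lemma mem_cube_matches s v x : (x \in cube v) = matches (perm_row s v) (point_row s x).
Proof.
rewrite /matches all2_map_diag inE; apply/forallP/allP => [x_v j _ | x_v i].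
  by have := x_v (s j); case: (v (s j)).
by have := x_v (s^-1 i)%g (mem_enum _ _); rewrite permKV; case: (v i).
Qed.

Lemma nth_perm_row s (v : starpat q n) (j : 'I_n) :
  nth None (perm_row s v) j = omap val (v (s j)).
Proof. by rewrite (nth_map j) ?size_enum_ord // nth_ord_enum. Qed.

Lemma perm_row_inj s : injective (@perm_row q n s).
Proof.
move=> v v' E; apply/ffunP => i; apply: (inj_omap val_inj).
by rewrite -(permKV s i) -!nth_perm_row E.
Qed.

Lemma perm_row_surj (s : 'S_n) r : size r = n -> all (fun o => odflt 0 o < q) r ->
  exists v : starpat q n, perm_row s v = r.
Proof.
move=> r_size r_lt; exists [ffun i => obind insub (nth None r (s^-1 i)%g)].
apply: (@eq_from_nth _ None); first by rewrite size_map size_enum_ord.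
rewrite size_map size_enum_ord => j j_lt.
rewrite (nth_perm_row s _ (Ordinal j_lt)) ffunE permK /=.
have /(allP r_lt) : nth None r j \in r by rewrite mem_nth ?r_size.
by case: (nth None r j) => //= a a_lt; rewrite insubT.
Qed.

Definition nat_perm (p : 'S_n) j := if insub j is Some i then val (p i) else j.

Lemma perm_row_select (s t : 'S_n) (v : starpat q n) :
  perm_row s v = select_cols (nat_perm (s * t^-1)) n (perm_row t v).
Proof.
apply: (@eq_from_nth _ None); first by rewrite !size_map -enumT size_enum_ord size_iota.
rewrite size_map size_enum_ord => j j_lt.
rewrite nth_select_cols // /nat_perm insubT (nth_perm_row s _ (Ordinal j_lt)).
by rewrite nth_perm_row permM permKV.
Qed.
End Cubes.

Section FractalPartitions.
Variables (q m : nat).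
Hypothesis q_gt1 : 1 < q.
Local Notation n := (ncols q m).

Definition fractal_cubes (s : 'S_n) : {set {set point q n}} :=
  [set cube v | v : starpat q n & perm_row s v \in Mfrac q m].

Lemma fractal_cubesP s B :
  reflect (exists2 v, perm_row s v \in Mfrac q m & B = cube v) (B \in fractal_cubes s).
Proof. by apply: (iffP imsetP) => -[v]; rewrite ?inE => v_in ->; exists v; rewrite ?inE. Qed.

Lemma perm_row_Mfrac s r : r \in Mfrac q m -> exists v : starpat q n, perm_row s v = r.
Proof. by move=> r_in; apply: perm_row_surj (size_Mfrac q_gt1 r_in) (Mfrac_lt q_gt1 r_in). Qed.

Lemma Mfrac_cube_cover s (x : point q n) : exists2 v, perm_row s v \in Mfrac q m & x \in cube v.
Proof.
have [r r_in r_x] := Mfrac_matching q_gt1 (size_point_row s x) (point_row_lt s x).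
by have [v vE] := perm_row_Mfrac s r_in; exists v; rewrite ?(mem_cube_matches s) vE.
Qed.

Lemma Mfrac_cube_uniq s (v1 v2 : starpat q n) x :
  perm_row s v1 \in Mfrac q m -> perm_row s v2 \in Mfrac q m ->
  x \in cube v1 -> x \in cube v2 -> v1 = v2.
Proof.
rewrite !(mem_cube_matches s) => v1_in v2_in x1 x2; apply: (@perm_row_inj q n s).
exact: (Mfrac_matching_uniq q_gt1 (size_point_row s x) (point_row_lt s x) v1_in v2_in x1 x2).
Qed.

Lemma fractal_cubes_partition s : partition (fractal_cubes s) [set: point q n].
Proof.
apply/and3P; split.
- apply/eqP/setP => x; rewrite inE; apply/bigcupP.
  have [v v_in x_v] := Mfrac_cube_cover s x.
  by exists (cube v) => //; apply/fractal_cubesP; exists v.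
- apply/trivIsetP => _ _ /fractal_cubesP[v1 v1_in ->] /fractal_cubesP[v2 v2_in ->] v1_v2.
  rewrite disjoint_subset; apply/subsetP => x x1; rewrite inE; apply/negP => x2.
  by rewrite (Mfrac_cube_uniq v1_in v2_in x1 x2) eqxx in v1_v2.
- apply/negP => /fractal_cubesP[v _ /setP/(_ [ffun i => odflt (Ordinal (ltnW q_gt1)) (v i)])].
  by rewrite inE fill_in_cube.
Qed.

Lemma fractal_cubes_subcubes s : [forall B in fractal_cubes s, is_subcube B].
Proof. by apply/forall_inP => _ /fractal_cubesP[v _ ->]; apply/existsP; exists v. Qed.

Lemma fractal_cubes_fractal s : fractal_partition m (fractal_cubes s).
Proof.
apply/existsP; exists s; apply: uniq_perm; rewrite ?Mfrac_uniq //.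
  rewrite map_inj_in_uniq ?enum_uniq // => B1 B2.
  rewrite !mem_enum => /fractal_cubesP[v1 _ ->] /fractal_cubesP[v2 _ ->].
  by rewrite !star_pattern_cube // => /perm_row_inj ->.
move=> r; apply/mapP/idP => [[B] | r_in].
  by rewrite mem_enum => /fractal_cubesP[v v_in ->] ->; rewrite star_pattern_cube.
have [v vE] := perm_row_Mfrac s r_in; exists (cube v); last by rewrite star_pattern_cube.
by rewrite mem_enum; apply/fractal_cubesP; exists v; rewrite ?vE.
Qed.

Lemma fractal_partition_cubes (P : {set {set point q n}}) :
  [forall B in P, is_subcube B] -> fractal_partition m P -> exists s, P = fractal_cubes s.
Proof.
move=> /forall_inP P_sub /existsP[s P_s]; exists s.
apply/setP => B; apply/idP/fractal_cubesP => [B_in | [v v_in ->]].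
  exists (star_pattern B); last by rewrite star_patternK // P_sub.
  by rewrite -(perm_mem P_s); apply: map_f; rewrite mem_enum.
move: v_in; rewrite -(perm_mem P_s) => /mapP[B' B'_in /perm_row_inj ->].
by rewrite star_patternK ?P_sub // -mem_enum.
Qed.

Lemma fractal_cubes_inj : injective fractal_cubes.
Proof.
move=> s t st; apply/permP => i.
suff /(_ i (ltn_ord i)) : forall j, j < n -> nat_perm (s * t^-1) j = j.
  by rewrite /nat_perm valK permM => /val_inj/(congr1 t); rewrite permKV.
apply: (Mfrac_rigid q_gt1) => [j j_lt | r r_in].
  by rewrite /nat_perm; case: insub => [k|] //; apply: ltn_ord.
have [v vE] := perm_row_Mfrac t r_in.
have /fractal_cubesP[v' v'_in /cube_inj v'E] : cube v \in fractal_cubes s.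
  by rewrite st; apply/fractal_cubesP; exists v; rewrite ?vE.
by rewrite -vE -perm_row_select v'E.
Qed.

Lemma fractal_partitionsE :
  [set P : {set {set point q n}} | [&& partition P [set: point q n],
      [forall B in P, is_subcube B] & fractal_partition m P]] = fractal_cubes @: setT.
Proof.
apply/setP => P; rewrite inE; apply/and3P/imsetP => [[_ P_sub P_frac] | [s _ ->]].
  by have [s ->] := fractal_partition_cubes P_sub P_frac; exists s.
split; [exact: fractal_cubes_partition | exact: fractal_cubes_subcubes |].
exact: fractal_cubes_fractal.
Qed.

End FractalPartitions.

Lemma ncols_geom q m : 1 < q -> (q ^ m - 1) %/ (q - 1) = ncols q m.
Proof.
move=> q_gt1; suff -> : q ^ m - 1 = (q - 1) * ncols q m by rewrite mulKn //; lia.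
elim: m => [|m IH]; first by rewrite muln0.
by rewrite /= expnS; have := expn_gt0 q m; nia.
Qed.

Theorem mainTheorem8 (q m n : nat) :
  2 <= q -> 1 <= m -> n = (q ^ m - 1) %/ (q - 1) ->
  #|[set P : {set {set point q n}} |
       [&& partition P [set: point q n],
           [forall B in P, is_subcube B] &
           fractal_partition m P]]| = n`!.
Proof.
move=> q_gt1 _; rewrite ncols_geom // => ->.
by rewrite fractal_partitionsE // card_imset ?cardsT ?card_Sn //; apply: fractal_cubes_inj.
Qed.
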